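(* Let $N\geq 1$, let $\alpha,\beta\in\mathbb{R}$, and let $a_1,\dots,a_N\in[0,2\pi)$. For each $i$ let $\Omega_i^*=\frac1N\sum_{j=1}^N\sin(a_i-a_j+\alpha)\sin(a_i-a_j+\beta)$. Consider the layer equation (the system at $\varepsilon=0$) \[ \dot\psi_i = -\Omega_i^*+\frac{1}{N}\sum_{j=1}^N\sin(a_i-a_j+\beta)\sin(\psi_i+a_i-\psi_j-a_j+\alpha)-\frac{1}{N}\sum_{j=1}^N\sigma_{ij}\sin(\psi_i+a_i-\psi_j-a_j+\alpha),\qquad \dot\sigma_{ij}=0, \] for $i,j=1,\ldots,N$, of the slow-fast system obtained by adding $\dot\sigma_{ij}=-\varepsilon\big(\sin(\psi_i+a_i-\psi_j-a_j+\beta)-\sin(a_i-a_j+\beta)+\sigma_{ij}\big)$. Then the equilibrium point $(\psi_i,\sigma_{ij})=(0,0)$ of the layer equation is non-hyperbolic. In particular, the antipodal solution, corresponding to $a_i\in\{0,\pi\}$ for all $i$, is nilpotent for $\beta=0$.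
   Context: This system arises from the adaptive Kuramoto network $\dot\phi_i=-\frac1N\sum_j\kappa_{ij}\sin(\phi_i-\phi_j+\alpha)$, $\dot\kappa_{ij}=-\varepsilon(\sin(\phi_i-\phi_j+\beta)+\kappa_{ij})$ via the co-rotating coordinates $\psi_i=\phi_i-(\Omega^*t+a_i)$ and shifted weights $\sigma_{ij}=\kappa_{ij}+\sin(a_i-a_j+\beta)$. An equilibrium is non-hyperbolic if its Jacobian has an eigenvalue with zero real part, and nilpotent if all eigenvalues of its Jacobian are zero. *)

From HB Require Import structures.
From mathcomp Require Import all_boot all_order all_algebra.
From mathcomp Require Import all_classical all_reals all_analysis.
From mathcomp Require Import complex.
Set Implicit Arguments. Unset Strict Implicit. Unset Printing Implicit Defensive.
Import Order.TTheory GRing.Theory Num.Theory.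
Local Open Scope ring_scope.

(* State vector of dimension N + N*N:
   index  lshift (N*N) i                    <-> psi_i
   index  rshift N (mxvec_index i j)        <-> sigma_ij            *)
Definition psi_of {R : realType} {N : nat} (x : 'rV[R]_(N + N * N)) (i : 'I_N) : R :=
  x ord0 (lshift (N * N) i).
Definition sigma_of {R : realType} {N : nat} (x : 'rV[R]_(N + N * N)) (i j : 'I_N) : R :=
  x ord0 (rshift N (mxvec_index i j)).

Definition Omega_star {R : realType} {N : nat} (alpha beta : R) (a : 'I_N -> R) (i : 'I_N) : R :=
  N%:R^-1 * \sum_(j < N) sin (a i - a j + alpha) * sin (a i - a j + beta).

Definition layer_psi {R : realType} {N : nat} (alpha beta : R) (a : 'I_N -> R)
  (x : 'rV[R]_(N + N * N)) (i : 'I_N) : R :=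
  - Omega_star alpha beta a i
  + N%:R^-1 * \sum_(j < N) sin (a i - a j + beta)
                 * sin (psi_of x i + a i - psi_of x j - a j + alpha)
  - N%:R^-1 * \sum_(j < N) sigma_of x i j
                 * sin (psi_of x i + a i - psi_of x j - a j + alpha).

Definition layer_field {R : realType} {N : nat} (alpha beta : R) (a : 'I_N -> R)
  (x : 'rV[R]_(N + N * N)) : 'rV[R]_(N + N * N) :=
  \row_(k < N + N * N)
     match fintype.split k with
     | inl i => layer_psi alpha beta a x i
     | inr _ => 0
     end.

Definition complex_eigenvalue {R : realType} {n : nat} (A : 'M[R]_n) (lam : R[i]) : Prop :=
  eigenvalue (map_mx (fun x : R => (x%:C)%C) A) lam.

Definition nonhyperbolic {R : realType} {n : nat} (A : 'M[R]_n) : Prop :=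
  exists lam : R[i], complex_eigenvalue A lam /\ complex.Re lam = 0.

(* nilpotent (in the paper's sense): all eigenvalues are zero *)
Definition all_eigenvalues_zero {R : realType} {n : nat} (A : 'M[R]_n) : Prop :=
  forall lam : R[i], complex_eigenvalue A lam -> lam = 0.

From HB Require Import structures.
From mathcomp Require Import all_boot all_order all_algebra.
From mathcomp Require Import all_classical all_reals all_analysis.
From mathcomp Require Import complex.
Import Order.TTheory GRing.Theory Num.Theory.
Import numFieldNormedType.Exports.
Local Open Scope ring_scope.

(* At epsilon = 0 the weights sigma_ij are constants, so the sigma-components
   of the layer vector field vanish identically and so do the corresponding
   columns of its Jacobian ([jacobian f p i j] is the derivative of the j-th
   component of f in the i-th direction).  Since N >= 1 there is such a
   column, hence 0 is an eigenvalue.  For beta = 0 and a_i in {0, pi} every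
   sin (a_i - a_j + beta) vanishes, so the psi-components vanish on the plane
   sigma = 0 and the psi-psi block of the Jacobian is zero as well.  The
   Jacobian is then strictly block lower triangular, squares to zero, and has
   only the eigenvalue 0.  Both facts are proved for the real matrix and
   carried over to its complex eigenvalues through the field morphism
   x |-> x + 0i. *)

Section partial_derivatives.
Context {R : realFieldType}.

Lemma derive_line_cst {V W : normedModType R} (f : V -> W) (a v : V) :
  (forall h : R, f (h *: v + a) = f a) -> 'D_v f a = 0.
Proof.
move=> fva; rewrite /derive.
have -> : (fun h : R => h^-1 *: ((f \o shift a) (h *: v) - f a)) = cst 0.
  by apply/funext => h /=; rewrite fva subrr scaler0.
exact: lim_cst.
Qed.

Lemma jacobian_coordE m n (f : 'rV[R]_m -> 'rV[R]_n) p i j :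
  differentiable f p ->
  jacobian f p i j = 'D_(delta_mx 0 i) (fun x => f x 0 j) p.
Proof.
move=> df; have := derive_mx (diff_derivable (v := delta_mx 0 i) df).
move/(congr1 (fun M : 'rV[R]_n => M 0 j)).
by rewrite deriveEjacobian // -rowE !mxE => <-.
Qed.

Lemma jacobian_eq0 m n (f : 'rV[R]_m -> 'rV[R]_n) p i j :
  differentiable f p -> (forall h : R, f (h *: delta_mx 0 i + p) 0 j = f p 0 j) ->
  jacobian f p i j = 0.
Proof. by move=> df fp; rewrite jacobian_coordE //; exact: derive_line_cst. Qed.

Lemma differentiable_sum_apply {V W : normedModType R} m (f : 'I_m -> V -> W) x :
  (forall i, differentiable (f i) x) ->
  differentiable (fun y => \sum_(i < m) f i y) x.
Proof. by move=> df; rewrite -fct_sumE; exact: differentiable_sum. Qed.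

Lemma differentiable_row {V : normedModType R} n (g : V -> 'rV[R]_n) x :
  (forall j, differentiable (fun y => g y 0 j) x) -> differentiable g x.
Proof.
move=> dg; rewrite (_ : g = fun y => \sum_(j < n) g y 0 j *: delta_mx 0 j).
  by apply: differentiable_sum_apply => j; exact: differentiableZl.
by apply/funext => y; rewrite -row_sum_delta.
Qed.

End partial_derivatives.

Lemma differentiable_sin_comp {R : realType} {V : normedModType R} (f : V -> R) x :
  differentiable f x -> differentiable (fun y => sin (f y)) x.
Proof.
by move=> df; apply: differentiable_comp => //; exact/derivable1_diffP/derivable_sin.
Qed.

Lemma det_col0 {R : comPzRingType} n (A : 'M[R]_n) j : col j A = 0 -> \det A = 0.
Proof.
move=> /matrixP Aj0; rewrite (expand_det_col _ j) big1 // => i _.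
by have := Aj0 i 0; rewrite !mxE => ->; rewrite mul0r.
Qed.

Section eigenvalue_zero.
Context {F : fieldType} {n : nat}.
Implicit Type A : 'M[F]_n.

Lemma eigenvalue0_col0 A j : col j A = 0 -> eigenvalue A 0.
Proof.
move=> /det_col0/eqP/det0P[v v0 vA0]; apply/eigenvalueP.
by exists v; rewrite // vA0 scale0r.
Qed.

Lemma eigenvalue_sqrmx0 A lam : A *m A = 0 -> eigenvalue A lam -> lam = 0.
Proof.
move=> AA0 /eigenvalueP[v vA v0].
have : v *m (A *m A) = lam ^+ 2 *: v by rewrite mulmxA vA -scalemxAl vA scalerA.
rewrite AA0 mulmx0 => /esym/eqP.
by rewrite scaler_eq0 (negbTE v0) orbF expf_eq0 /= => /eqP.
Qed.

End eigenvalue_zero.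

Lemma mulmx_strictly_lower_block {R : pzRingType} m n (A : 'M[R]_(m + n)) :
  rsubmx A = 0 -> ulsubmx A = 0 -> A *m A = 0.
Proof.
move=> rA0 /matrixP ulA0.
have uA0 : usubmx (lsubmx A) = 0.
  by apply/matrixP => i j; have := ulA0 i j; rewrite !mxE.
rewrite -[A]hsubmxK rA0 -[lsubmx A]vsubmxK uA0.
by rewrite mul_mx_row mul_row_col !mulmx0 !mul0mx addr0 row_mx0.
Qed.

Lemma complex_eigenvalue_real {R : realType} n (A : 'M[R]_n) (x : R) :
  complex_eigenvalue A x%:C%C <-> eigenvalue A x.
Proof. by rewrite -(eigenvalue_map (real_complex R)). Qed.

Section layer_equation.
Context {R : realType} {N : nat} (alpha beta : R) (a : 'I_N -> R).
Notation f := (layer_field alpha beta a).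

Lemma layer_field_psi x i : f x 0 (lshift (N * N) i) = layer_psi alpha beta a x i.
Proof. by rewrite mxE (unsplitK (inl i)). Qed.

Lemma layer_field_sigma x l : f x 0 (rshift N l) = 0.
Proof. by rewrite mxE (unsplitK (inr l)). Qed.

Lemma differentiable_layer_psi i x :
  differentiable (fun y => layer_psi alpha beta a y i) x.
Proof.
have dpsi k : differentiable (fun y => psi_of y k) x by exact: differentiable_coord.
have dsigma k l : differentiable (fun y => sigma_of y k l) x by exact: differentiable_coord.
have dsin j : differentiable (fun y => sin (psi_of y i + a i - psi_of y j - a j + alpha)) x.
  apply: differentiable_sin_comp.
  apply: differentiableD; last exact: differentiable_cst.
  apply: differentiableB; last exact: differentiable_cst.
  apply: differentiableB => //.
  by apply: differentiableD => //; exact: differentiable_cst.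
apply: differentiableB; first apply: differentiableD.
- exact: differentiable_cst.
- apply: differentiableM; first exact: differentiable_cst.
  apply: differentiable_sum_apply => j.
  by apply: differentiableM => //; exact: differentiable_cst.
- apply: differentiableM; first exact: differentiable_cst.
  by apply: differentiable_sum_apply => j; exact: differentiableM.
Qed.

Lemma differentiable_layer_field x : differentiable f x.
Proof.
apply: differentiable_row => k; rewrite -(splitK k).
case: (fintype.split k) => [i|l].
- under eq_fun do rewrite layer_field_psi; exact: differentiable_layer_psi.
- under eq_fun do rewrite layer_field_sigma; exact: differentiable_cst.
Qed.

Lemma rsubmx_jacobian_layer_field p : rsubmx (jacobian f p) = 0.
Proof.
apply/matrixP => k l; rewrite [LHS]mxE [RHS]mxE.
apply: jacobian_eq0 => [|h]; first exact: differentiable_layer_field.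
by rewrite !layer_field_sigma.
Qed.

End layer_equation.

Lemma sin_sub_antipodal {R : realType} (x y : R) :
  x = 0 \/ x = pi -> y = 0 \/ y = pi -> sin (x - y) = 0.
Proof.
by move=> [] -> [] ->; rewrite ?subrr ?sin0 ?subr0 ?sinpi // sub0r sinN sinpi oppr0.
Qed.

Section antipodal.
Context {R : realType} {N : nat} (alpha : R) (a : 'I_N -> R).
Hypothesis antipodal : forall i, a i = 0 \/ a i = pi.

Lemma layer_psi_antipodal x i :
  (forall j k, sigma_of x j k = 0) -> layer_psi alpha 0 a x i = 0.
Proof.
move=> sigma0; rewrite /layer_psi /Omega_star.
have sin_a j : sin (a i - a j + 0) = 0 by rewrite addr0 sin_sub_antipodal.
by rewrite !big1 => [|j _|j _|j _]; rewrite ?sigma0 ?sin_a ?mul0r ?mulr0 ?oppr0 ?addr0.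
Qed.

Lemma ulsubmx_jacobian_layer_field_antipodal :
  ulsubmx (jacobian (layer_field alpha 0 a) 0) = 0.
Proof.
apply/matrixP => k i; rewrite [LHS]mxE [LHS]mxE [RHS]mxE.
apply: jacobian_eq0 => [|h]; first exact: differentiable_layer_field.
by rewrite !layer_field_psi !layer_psi_antipodal // => j l;
  rewrite /sigma_of !mxE ?eq_rlshift ?andbF ?mulr0 ?addr0.
Qed.

End antipodal.

Theorem proposition4 (R : realType) (N : nat) (hN : (1 <= N)%N)
  (alpha beta : R) (a : 'I_N -> R)
  (ha : forall i, 0 <= a i < 2 * pi) :
  nonhyperbolic (jacobian (layer_field alpha beta a) 0)
  /\ ((beta = 0 /\ (forall i, a i = 0 \/ a i = pi)) ->
      all_eigenvalues_zero (jacobian (layer_field alpha beta a) 0)).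
Proof.
split.
  exists 0; split => //.
  rewrite -(rmorph0 (real_complex R)) complex_eigenvalue_real.
  pose i0 : 'I_N := Ordinal hN.
  apply: (eigenvalue0_col0 _ (rshift N (mxvec_index i0 i0))).
  by rewrite -col_rsubmx rsubmx_jacobian_layer_field; exact: col0.
move=> [-> antipodal] lam; apply: eigenvalue_sqrmx0.
rewrite -map_mxM mulmx_strictly_lower_block ?map_mx0 //.
  exact: rsubmx_jacobian_layer_field.
exact: ulsubmx_jacobian_layer_field_antipodal.
Qed.
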